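(* Let $m,n\ge 1$ and let $P=\mathbb{R}^{m\times n}$ be the space of real $m\times n$ arrays $z=(z_{ij})$, with the group $\Gamma=\mathbf{S}_m\times\mathbf{S}_n$ acting by $((\sigma,\tau)z)_{ij}=z_{\sigma^{-1}(i)\,\tau^{-1}(j)}$. Then a linear map $L:P\to P$ commutes with the action of $\Gamma$ (i.e. $L(\gamma z)=\gamma L(z)$ for all $\gamma\in\Gamma$, $z\in P$) if and only if $L$ is a linear admissible map for the influence network $\mathcal{N}_{mn}$, i.e. if and only if there exist real constants $\alpha,\beta,\gamma,\delta$ such that for all $i,j$ $$L(z)_{ij}=\alpha z_{ij}+\beta\sum_{l\ne j}z_{il}+\gamma\sum_{k\ne i}z_{kj}+\delta\sum_{k\ne i,\,l\ne j}z_{kl}.$$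
   Context: The influence network $\mathcal{N}_{mn}$ has node set $\{(i,j):1\le i\le m,\ 1\le j\le n\}$, all nodes of one type, and three arrow types into each node $(i,j)$: row arrows from the nodes in $A_{ij}=\{(i,l):l\ne j\}$, column arrows from $O_{ij}=\{(k,j):k\ne i\}$, and diagonal arrows from $E_{ij}=\{(k,l):k\ne i,\ l\ne j\}$. A map $G:P\to P$ is admissible for $\mathcal{N}_{mn}$ if there is a single function $g$, independent of $(i,j)$, with $G_{ij}(z)=g(z_{ij},z_{A_{ij}},z_{O_{ij}},z_{E_{ij}})$, where $g$ is invariant under all permutations of the arguments within each of the three groups $z_{A_{ij}}$, $z_{O_{ij}}$, $z_{E_{ij}}$. Linear admissible maps are exactly those of the displayed form. *)

From HB Require Import structures.
From mathcomp Require Import all_boot all_order all_algebra all_fingroup.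
Set Implicit Arguments. Unset Strict Implicit. Unset Printing Implicit Defensive.
Import Order.TTheory GRing.Theory Num.Theory.
Local Open Scope ring_scope.

Definition gact (R : Type) (m n : nat) (s : 'S_m) (t : 'S_n)
  (z : 'M[R]_(m, n)) : 'M[R]_(m, n) :=
  \matrix_(i < m, j < n) z ((s^-1)%g i) ((t^-1)%g j).

Definition Gamma_equivariant (R : Type) (m n : nat)
  (L : 'M[R]_(m, n) -> 'M[R]_(m, n)) : Prop :=
  forall (s : 'S_m) (t : 'S_n) (z : 'M[R]_(m, n)),
    L (gact s t z) = gact s t (L z).

(* Linear admissible maps for the influence network N_mn
   (the displayed form: self, row arrows A_ij, column arrows O_ij,
   diagonal arrows E_ij). *)
Definition linear_admissible_Nmn (R : ringType) (m n : nat)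
  (L : 'M[R]_(m, n) -> 'M[R]_(m, n)) : Prop :=
  exists (a b c d : R), forall (z : 'M[R]_(m, n)) (i : 'I_m) (j : 'I_n),
    L z i j = a * z i j
            + b * (\sum_(l < n | l != j) z i l)
            + c * (\sum_(k < m | k != i) z k j)
            + d * (\sum_(k < m | k != i) \sum_(l < n | l != j) z k l).

From Pilot Require Import Defs.
From HB Require Import structures.
From mathcomp Require Import all_boot all_order all_algebra all_fingroup.
Set Implicit Arguments. Unset Strict Implicit. Unset Printing Implicit Defensive.
Import GRing.Theory.
Local Open Scope ring_scope.

(* Write [L z i j = \sum_(k, l) z k l * K k l i j] with [K k l i j] the
   (i, j) entry of the image of the unit matrix [delta_mx k l].
   Equivariance makes [K] invariant under the diagonal action of S_m x S_n on
   index quadruples, whose orbits are exactly the four equality patterns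
   ([k == i], [l == j]): any two pairs of points of a finite set with the
   same equality pattern are related by a permutation.  Sorting the double
   sum by pattern yields the four coefficients.  Conversely, each of the four
   sums is carried to itself by the action after reindexing. *)

Lemma exists_perm_pair (T : finType) (k i k' i' : T) :
  (k == i) = (k' == i') -> exists s : {perm T}, s k = k' /\ s i = i'.
Proof.
have [<- /esym/eqP <-|neq_ki /esym/negbT neq_ki'] := eqVneq k i.
  by exists (tperm k k'); rewrite tpermL.
have neq_k'i : tperm k k' i != k'.
  by rewrite -[k' in _ != k'](tpermL k k') (inj_eq perm_inj) eq_sym.
exists (tperm k k' * tperm (tperm k k' i) i')%g; rewrite !permM tpermL.
by split; [apply: tpermD; rewrite // eq_sym | rewrite tpermL].
Qed.

(* Falls back to [x0] when no witness exists (only for [b = false] on a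
   singleton type, where no pair [k != i] exists either). *)
Definition eqb_witness (T : finType) (x0 : T) (b : bool) : T :=
  odflt x0 [pick x | (x == x0) == b].

Lemma eqb_witnessE (T : finType) (x0 k i : T) : (eqb_witness x0 (k == i) == x0) = (k == i).
Proof.
rewrite /eqb_witness; case: pickP => [x /eqP //|no_witness] /=.
have [eq_ki|neq_ki] := eqVneq k i; first by rewrite eqxx.
move: (no_witness k) (no_witness i); rewrite /= (negbTE neq_ki) !eqbF_neg.
by move=> /negbFE/eqP eq_kx0 /negbFE/eqP eq_ix0; rewrite eq_kx0 eq_ix0 eqxx in neq_ki.
Qed.

Lemma eq_pattern_witness (R : Type) (T U : finType) (K : T -> U -> T -> U -> R)
    (x0 : T) (y0 : U) :
  (forall k l i j k' l' i' j', (k == i) = (k' == i') -> (l == j) = (l' == j') ->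
     K k l i j = K k' l' i' j') ->
  forall k l i j,
    K k l i j = K (eqb_witness x0 (k == i)) (eqb_witness y0 (l == j)) x0 y0.
Proof. by move=> K_pattern k l i j; apply: K_pattern; rewrite eqb_witnessE. Qed.

Lemma sum_by_eq_pattern (R : comPzRingType) (T U : finType) (z : T -> U -> R)
    (f : bool -> bool -> R) (i : T) (j : U) :
  \sum_k \sum_l z k l * f (k == i) (l == j) =
    f true true * z i j
  + f true false * (\sum_(l | l != j) z i l)
  + f false true * (\sum_(k | k != i) z k j)
  + f false false * (\sum_(k | k != i) \sum_(l | l != j) z k l).
Proof.
have row_split k : \sum_l z k l * f (k == i) (l == j) =
    f (k == i) true * z k j + \sum_(l | l != j) f (k == i) false * z k l.
  rewrite (bigD1 j) //= eqxx mulrC; congr (_ + _).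
  by apply: eq_bigr => l /negbTE ->; rewrite mulrC.
rewrite (bigD1 i) //= row_split eqxx.
rewrite (eq_bigr (fun k => f false true * z k j
                      + \sum_(l | l != j) f false false * z k l)); last first.
  by move=> k /negbTE neq_ki; rewrite row_split neq_ki.
rewrite big_split /= !mulr_sumr !addrA; congr (_ + _).
by apply: eq_bigr => k _; rewrite mulr_sumr.
Qed.

Lemma sum_neq_perm (V : nmodType) (T : finType) (s : {perm T}) (F : T -> V) (j : T) :
  \sum_(l | l != j) F (s l) = \sum_(l | l != s j) F l.
Proof.
rewrite [RHS](reindex_inj (@perm_inj _ s)); apply: eq_bigl => l.
by rewrite (inj_eq perm_inj).
Qed.

Section GammaAction.

Variables (R : nzRingType) (m n : nat).
Implicit Types (s : 'S_m) (t : 'S_n) (z : 'M[R]_(m, n)) (i k : 'I_m) (j l : 'I_n).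

Lemma gactE s t z i j : Defs.gact s t z i j = z ((s^-1)%g i) ((t^-1)%g j).
Proof. exact: mxE. Qed.

Lemma gact_perm s t z i j : Defs.gact s t z (s i) (t j) = z i j.
Proof. by rewrite gactE !permK. Qed.

Lemma gact_delta s t k l :
  Defs.gact s t (delta_mx k l : 'M[R]_(m, n)) = delta_mx (s k) (t l).
Proof.
apply/matrixP => i j; rewrite -[i](permKV s) -[j](permKV t) gact_perm !mxE.
by rewrite !(inj_eq perm_inj).
Qed.

Lemma admissible_equivariant (L : 'M[R]_(m, n) -> 'M[R]_(m, n)) :
  linear_admissible_Nmn L -> Gamma_equivariant L.
Proof.
move=> [a [b [c [d L_form]]]] s t z; apply/matrixP => i j.
rewrite gactE !L_form gactE.
under [X in b * X]eq_bigr do rewrite gactE.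
under [X in c * X]eq_bigr do rewrite gactE.
under [X in d * X]eq_bigr do under eq_bigr do rewrite gactE.
rewrite (sum_neq_perm _ (fun l => z _ l)) (sum_neq_perm _ (fun k => z k _)).
under [X in d * X]eq_bigr do rewrite (sum_neq_perm _ (fun l => z _ l)).
by rewrite (sum_neq_perm _ (fun k => \sum_(l | l != _) z k l)).
Qed.

Variable L : {linear 'M[R]_(m, n) -> 'M[R]_(m, n)}.

Definition lin_coef k l i j : R := L (delta_mx k l) i j.

Lemma lin_coefE z i j : L z i j = \sum_k \sum_l z k l * lin_coef k l i j.
Proof.
rewrite {1}(matrix_sum_delta z) linear_sum summxE; apply: eq_bigr => k _.
by rewrite linear_sum summxE; apply: eq_bigr => l _; rewrite linearZ mxE.
Qed.

Hypothesis L_equivariant : Gamma_equivariant L.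

Lemma lin_coef_perm s t k l i j :
  lin_coef (s k) (t l) (s i) (t j) = lin_coef k l i j.
Proof. by rewrite /lin_coef -gact_delta L_equivariant gact_perm. Qed.

Lemma lin_coef_eq_pattern k l i j k' l' i' j' :
  (k == i) = (k' == i') -> (l == j) = (l' == j') ->
  lin_coef k l i j = lin_coef k' l' i' j'.
Proof.
move=> /exists_perm_pair [s [<- <-]] /exists_perm_pair [t [<- <-]].
by rewrite lin_coef_perm.
Qed.

End GammaAction.

Theorem theorem4p2 (R : realFieldType) (m n : nat) (hm : (0 < m)%N) (hn : (0 < n)%N)
  (L : {linear 'M[R]_(m, n) -> 'M[R]_(m, n)}) :
  Gamma_equivariant L <-> linear_admissible_Nmn L.
Proof.
split; last exact: admissible_equivariant.
move=> L_equivariant.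
pose i0 : 'I_m := Ordinal hm; pose j0 : 'I_n := Ordinal hn.
pose f p q := lin_coef L (eqb_witness i0 p) (eqb_witness j0 q) i0 j0.
exists (f true true), (f true false), (f false true), (f false false).
move=> z i j; rewrite lin_coefE -sum_by_eq_pattern.
apply: eq_bigr => k _; apply: eq_bigr => l _; congr (_ * _).
exact/eq_pattern_witness/lin_coef_eq_pattern.
Qed.
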